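(* Let $G$ be a group generated by elements $g_1,\dots,g_n$ and let $H$ be a cocommutative Hopf algebra over $\Bbbk$. Then every $\varphi\in\mathrm{Hom}_{\mathcal H}(G;H)$ is completely determined by the single element $\varphi_n(g_1,\dots,g_n)\in H^{\otimes n}$; that is, the evaluation map $\varphi\mapsto\varphi_n(g_1,\dots,g_n)$ from $\mathrm{Hom}_{\mathcal H}(G;H)$ to $H^{\otimes n}$ is injective.
   Context: $\Bbbk$ is a field of characteristic $0$. $H$ is a cocommutative Hopf algebra over $\Bbbk$ with multiplication $m$, comultiplication $\Delta$, unit $\eta\colon\Bbbk\to H$, counit $\epsilon\colon H\to\Bbbk$ and antipode $S$. For a group $G$, $\mathrm{Hom}_{\mathcal H}(G;H)$ denotes the set of sequences $\varphi=(\varphi_k)_{k\ge0}$ of functions $\varphi_k\colon G^k\to H^{\otimes k}$ (with $H^{\otimes 0}=\Bbbk$, $\varphi_0=1$) satisfying, for all $k$ and all group elements: (1) $\varphi_k$ commutes with the action of $\Sigma_k$ (permuting entries of $G^k$ and tensor factors); (2) $\varphi_k(1,g_1,\dots,g_{k-1})=\eta(1)\otimes\varphi_{k-1}(g_1,\dots,g_{k-1})$; (3) $(\epsilon\otimes\mathrm{id}^{k-1})\varphi_k(g_1,\dots,g_k)=\varphi_{k-1}(g_2,\dots,g_k)$; (4) $\varphi_k(g^{-1},g_1,\dots,g_{k-1})=(S\otimes\mathrm{id}^{k-1})\varphi_k(g,g_1,\dots,g_{k-1})$; (5) $\varphi_k(g,g,g_1,\dots,g_{k-2})=(\Delta\otimes\mathrm{id}^{k-2})\varphi_{k-1}(g,g_1,\dots,g_{k-2})$;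 (6) $\varphi_k(g_1g_2,g_3,\dots,g_{k+1})=(m\otimes\mathrm{id}^{k-1})\varphi_{k+1}(g_1,g_2,\dots,g_{k+1})$. *)

From HB Require Import structures.
From mathcomp Require Import all_boot all_order all_algebra all_fingroup.
Set Implicit Arguments. Unset Strict Implicit. Unset Printing Implicit Defensive.
Import GRing.Theory.
Local Open Scope ring_scope.

Definition fcons (T : Type) (k : nat) (x : T) (t : {ffun 'I_k -> T}) :
  {ffun 'I_k.+1 -> T} :=
  [ffun i => if unlift ord0 i is Some j then t j else x].

Definition ftail (T : Type) (k : nat) (t : {ffun 'I_k.+1 -> T}) :
  {ffun 'I_k -> T} := [ffun j => t (lift ord0 j)].

Definition fset (T : Type) (k : nat) (t : {ffun 'I_k -> T}) (i : 'I_k) (x : T) :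
  {ffun 'I_k -> T} := [ffun j => if j == i then x else t j].

Definition fperm (T : Type) (k : nat) (s : 'S_k) (t : {ffun 'I_k -> T}) :
  {ffun 'I_k -> T} := [ffun i => t ((s^-1)%g i)].

(* An element of H^{(x)k} is represented by a formal linear            *)
(* combination  sum_p  p.1 (p.2 0 (x) ... (x) p.2 (k-1))  of pure      *)
(* tensors; two representatives denote the same tensor ('teq') iff    *)
(* they have the same image under every k-multilinear map into every  *)
(* K-vector space, i.e. H^{(x)k} is the free vector space on H^k       *)
(* modulo the kernel of the universal multilinear map (standard        *)
(* construction of the tensor product).  H^{(x)0} = K.                 *)

Section Tensor.
Variables (K : fieldType) (H : algType K).

Definition fts (k : nat) := seq (K * {ffun 'I_k -> H}).

Definition multilinear (k : nat) (W : lmodType K) (f : {ffun 'I_k -> H} -> W) :=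
  forall (t : {ffun 'I_k -> H}) (i : 'I_k) (a : K) (x y : H),
    f (fset t i (a *: x + y)) = a *: f (fset t i x) + f (fset t i y).

Definition teval (k : nat) (W : lmodType K) (f : {ffun 'I_k -> H} -> W)
  (t : fts k) : W := \sum_(p <- t) p.1 *: f p.2.

Definition teq (k : nat) (t u : fts k) : Prop :=
  forall (W : lmodType K) (f : {ffun 'I_k -> H} -> W),
    multilinear f -> teval f t = teval f u.

(* vector space operations (addition is concatenation ++) *)
Definition tscale (k : nat) (a : K) (t : fts k) : fts k :=
  [seq (a * p.1, p.2) | p : K * {ffun 'I_k -> H} <- t].

Definition tpure (k : nat) (t : {ffun 'I_k -> H}) : fts k := [:: (1, t)].

Definition tunit (k : nat) : fts k := tpure [ffun => 1].

Definition tmul (k : nat) (t u : fts k) : fts k :=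
  [seq (p.1 * q.1, [ffun i => p.2 i * q.2 i])
  | p : K * {ffun 'I_k -> H} <- t, q : K * {ffun 'I_k -> H} <- u].

Definition tapply (k : nat) (f : H -> H) (i : 'I_k) (t : fts k) : fts k :=
  [seq (p.1, fset p.2 i (f (p.2 i))) | p : K * {ffun 'I_k -> H} <- t].

Definition tpermute (k : nat) (s : 'S_k) (t : fts k) : fts k :=
  [seq (p.1, fperm s p.2) | p : K * {ffun 'I_k -> H} <- t].

Definition tunit_first (k : nat) (t : fts k) : fts k.+1 :=
  [seq (p.1, fcons 1 p.2) | p : K * {ffun 'I_k -> H} <- t].

Definition tcounit_first (eps : H -> K) (k : nat) (t : fts k.+1) : fts k :=
  [seq (p.1 * eps (p.2 ord0), ftail p.2) | p : K * {ffun 'I_k.+1 -> H} <- t].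

Definition tmul_first (k : nat) (t : fts k.+2) : fts k.+1 :=
  [seq (p.1, fcons (p.2 ord0 * p.2 (lift ord0 ord0)) (ftail (ftail p.2)))
  | p : K * {ffun 'I_k.+2 -> H} <- t].

Definition tcop_first (D : H -> fts 2) (k : nat) (t : fts k.+1) : fts k.+2 :=
  flatten [seq [seq (p.1 * q.1, fcons (q.2 ord0) (fcons (q.2 ord_max) (ftail p.2)))
               | q : K * {ffun 'I_2 -> H} <- D (p.2 ord0)] | p : K * {ffun 'I_k.+1 -> H} <- t].

Definition tcop_second (D : H -> fts 2) (t : fts 2) : fts 3 :=
  flatten [seq [seq (p.1 * q.1, fcons (p.2 ord0) q.2)
               | q : K * {ffun 'I_2 -> H} <- D (p.2 ord_max)] | p : K * {ffun 'I_2 -> H} <- t].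

Definition tcounit_second (eps : H -> K) (t : fts 2) : fts 1 :=
  [seq (p.1 * eps (p.2 ord_max), [ffun _ => p.2 ord0])
  | p : K * {ffun 'I_2 -> H} <- t].

Definition tcontract (t : fts 2) : H :=
  teval (W := H) (fun x : {ffun 'I_2 -> H} => x ord0 * x ord_max) t.

Record is_hopf (D : H -> fts 2) (eps : H -> K) (S : H -> H) : Prop := {
  cop_linear : forall (a : K) (x y : H),
      teq (D (a *: x + y)) (tscale a (D x) ++ D y);
  counit_linear : forall (a : K) (x y : H), eps (a *: x + y) = a * eps x + eps y;
  antipode_linear : forall (a : K) (x y : H), S (a *: x + y) = a *: S x + S y;
  coassoc : forall x, teq (tcop_first D (D x)) (tcop_second D (D x));
  counit_l : forall x, teq (tcounit_first eps (D x)) (tpure [ffun => x]);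
  counit_r : forall x, teq (tcounit_second eps (D x)) (tpure [ffun => x]);
  cop1 : teq (D 1) (tunit 2);
  copM : forall x y, teq (D (x * y)) (tmul (D x) (D y));
  counit1 : eps 1 = 1;
  counitM : forall x y, eps (x * y) = eps x * eps y;
  antipode_l : forall x, tcontract (tapply S ord0 (D x)) = eps x *: 1;
  antipode_r : forall x, tcontract (tapply S ord_max (D x)) = eps x *: 1
}.

Definition cocommutative (D : H -> fts 2) : Prop :=
  forall x, teq (tpermute (tperm ord0 ord_max) (D x)) (D x).

Record is_homH (G : groupType) (D : H -> fts 2) (eps : H -> K) (S : H -> H)
  (phi : forall k : nat, {ffun 'I_k -> G} -> fts k) : Prop := {
  homH0 : forall g : {ffun 'I_0 -> G}, teq (phi 0 g) (tunit 0);
  (* (1) *)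
  homH_perm : forall k (s : 'S_k) (g : {ffun 'I_k -> G}),
      teq (phi k (fperm s g)) (tpermute s (phi k g));
  (* (2) *)
  homH_one : forall k (g : {ffun 'I_k -> G}),
      teq (phi k.+1 (fcons 1%g g)) (tunit_first (phi k g));
  (* (3) *)
  homH_counit : forall k (g : {ffun 'I_k.+1 -> G}),
      teq (tcounit_first eps (phi k.+1 g)) (phi k (ftail g));
  (* (4) *)
  homH_inv : forall k (x : G) (g : {ffun 'I_k -> G}),
      teq (phi k.+1 (fcons (x^-1)%g g)) (tapply S ord0 (phi k.+1 (fcons x g)));
  (* (5) *)
  homH_diag : forall k (x : G) (g : {ffun 'I_k -> G}),
      teq (phi k.+2 (fcons x (fcons x g))) (tcop_first D (phi k.+1 (fcons x g)));
  (* (6) *)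
  homH_mul : forall k (x y : G) (g : {ffun 'I_k -> G}),
      teq (phi k.+1 (fcons (x * y)%g g)) (tmul_first (phi k.+2 (fcons x (fcons y g))))
}.

End Tensor.

Inductive in_gen (G : groupType) (n : nat) (gs : {ffun 'I_n -> G}) : G -> Prop :=
  | in_gen_base i : in_gen gs (gs i)
  | in_gen_one : in_gen gs 1%g
  | in_gen_mul x y : in_gen gs x -> in_gen gs y -> in_gen gs (x * y)%g
  | in_gen_inv x : in_gen gs x -> in_gen gs (x^-1)%g.

From HB Require Import structures.
From mathcomp Require Import all_boot all_order all_algebra all_fingroup.
Set Implicit Arguments. Unset Strict Implicit. Unset Printing Implicit Defensive.
Import GRing.Theory.
Local Open Scope ring_scope.

(* Say that phi and psi agree on a tuple t of group elements when
   phi_k(t) = psi_k(t).  Each of the axioms (1)-(6) writes phi on a modified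
   tuple as a fixed linear operation (a permutation of tensor factors, eta,
   epsilon, S, Delta or m on the first factor) applied to phi on the original
   tuple, and these operations are well defined on tensors.  Hence agreement
   survives permuting the entries, deleting one (3), repeating one (5),
   inserting 1 (2), and inverting (4) or multiplying (6) leading entries.
   Since every element of G is a word in the generators, it can be added to
   any tuple containing all the generators; adding the entries of an
   arbitrary tuple to (g_1, ..., g_n) and then deleting the generators gives
   agreement everywhere.  Neither the characteristic of K nor
   cocommutativity plays a role. *)

Section FfunTuples.
Variable T : Type.

Lemma fcons0 k (x : T) (t : {ffun 'I_k -> T}) : fcons x t ord0 = x.
Proof. by rewrite ffunE unlift_none. Qed.

Lemma fconsS k (x : T) (t : {ffun 'I_k -> T}) j : fcons x t (lift ord0 j) = t j.
Proof. by rewrite ffunE liftK. Qed.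

Lemma fcons_max2 (x y : T) (t : {ffun 'I_0 -> T}) : fcons x (fcons y t) ord_max = y.
Proof. by rewrite (_ : ord_max = lift ord0 ord0) ?fconsS ?fcons0 //; apply: val_inj. Qed.

Lemma ftail_fcons k (x : T) (t : {ffun 'I_k -> T}) : ftail (fcons x t) = t.
Proof. by apply/ffunP => j; rewrite ffunE fconsS. Qed.

Lemma fcons_ftail k (t : {ffun 'I_k.+1 -> T}) : fcons (t ord0) (ftail t) = t.
Proof. by apply/ffunP => i; rewrite ffunE; case: unliftP => [j ->|->]; rewrite ?ffunE. Qed.

Lemma fset_fcons0 k (x v : T) (t : {ffun 'I_k -> T}) :
  fset (fcons x t) ord0 v = fcons v t.
Proof.
apply/ffunP => i; rewrite !ffunE; case: unliftP => [j ->|->]; last by rewrite eqxx.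
by rewrite eq_sym (negbTE (neq_lift _ _)).
Qed.

Lemma fset_fconsS k (x v : T) (t : {ffun 'I_k -> T}) j :
  fset (fcons x t) (lift ord0 j) v = fcons x (fset t j v).
Proof.
apply/ffunP => i; rewrite !ffunE; case: unliftP => [j' ->|->].
  by rewrite (inj_eq (lift_inj (h:=ord0))) ffunE.
by rewrite (negbTE (neq_lift _ _)).
Qed.

Lemma fperm_fset k (s : 'S_k) (t : {ffun 'I_k -> T}) i v :
  fperm s (fset t i v) = fset (fperm s t) (s i) v.
Proof.
apply/ffunP => j; rewrite !ffunE.
by rewrite (_ : (s^-1)%g j == i = (j == s i)) //; apply/eqP/eqP => [<-|->]; rewrite ?permKV ?permK.
Qed.

Lemma codom_fcons k (x : T) (t : {ffun 'I_k -> T}) :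
  codom (fcons x t) = x :: codom t.
Proof.
rewrite !codomE enum_ordSl /= fcons0 -map_comp; congr (_ :: _).
by apply: eq_map => j /=; rewrite fconsS.
Qed.

End FfunTuples.

Definition ffun_of_seq (T : Type) (x0 : T) (l : seq T) : {ffun 'I_(size l) -> T} :=
  [ffun i : 'I_(size l) => nth x0 l i].

Lemma codom_ffun_of_seq (T : eqType) (x0 : T) (l : seq T) : codom (ffun_of_seq x0 l) = l.
Proof.
apply: (@eq_from_nth _ x0); first by rewrite size_codom card_ord.
move=> i; rewrite size_codom card_ord => il.
by rewrite codomE (nth_map (Ordinal il)) ?size_enum_ord // ffunE nth_enum_ord.
Qed.

Lemma perm_codom_fperm (T : eqType) k (t u : {ffun 'I_k -> T}) :
  perm_eq (codom u) (codom t) -> exists s : 'S_k, u = fperm s t.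
Proof.
move=> P; have /tuple_permP[p E] : perm_eq (codom u) [tuple t i | i < k].
  by rewrite /= -codomE.
exists (p^-1)%g; apply/ffunP => i; rewrite ffunE invgK.
have := congr1 (fun s => nth (u i) s i) E.
rewrite codomE /= (nth_map i) ?size_enum_ord // nth_ord_enum.
by rewrite (nth_map i) ?size_enum_ord // nth_ord_enum tnth_mktuple.
Qed.

Section TensorOperations.
Variables (K : fieldType) (H : algType K).

Lemma teq_sym k (t u : fts H k) : teq t u -> teq u t.
Proof. by move=> E W f Hf; rewrite E. Qed.

Lemma teq_trans k (t u v : fts H k) : teq t u -> teq u v -> teq t v.
Proof. by move=> E1 E2 W f Hf; rewrite E1 // E2. Qed.

Section Teval.
Variables (k : nat) (W : lmodType K).

Lemma teval_cat (f : {ffun 'I_k -> H} -> W) t u :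
  teval f (t ++ u) = teval f t + teval f u.
Proof. by rewrite /teval big_cat. Qed.

Lemma teval_tscale (f : {ffun 'I_k -> H} -> W) a t :
  teval f (tscale a t) = a *: teval f t.
Proof.
by rewrite /teval big_map scaler_sumr; apply: eq_bigr => p _; rewrite scalerA.
Qed.

Lemma eq_teval (f g : {ffun 'I_k -> H} -> W) t : f =1 g -> teval f t = teval g t.
Proof. by move=> E; apply: eq_bigr => p _; rewrite E. Qed.

Lemma teval_linear (f g : {ffun 'I_k -> H} -> W) a t :
  teval (fun x => a *: f x + g x) t = a *: teval f t + teval g t.
Proof.
rewrite /teval scaler_sumr -big_split; apply: eq_bigr => p _ /=.
by rewrite scalerDr !scalerA mulrC.
Qed.

Lemma teval_map m (f : {ffun 'I_m -> H} -> W) (h : {ffun 'I_k -> H} -> {ffun 'I_m -> H}) t :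
  teval f [seq (p.1, h p.2) | p : K * {ffun 'I_k -> H} <- t] = teval (f \o h) t.
Proof. by rewrite /teval big_map. Qed.

Lemma teval_map_weighted m (f : {ffun 'I_m -> H} -> W) (c : {ffun 'I_k -> H} -> K)
    (h : {ffun 'I_k -> H} -> {ffun 'I_m -> H}) t :
  teval f [seq (p.1 * c p.2, h p.2) | p : K * {ffun 'I_k -> H} <- t]
  = teval (fun x => c x *: f (h x)) t.
Proof. by rewrite /teval big_map; apply: eq_bigr => p _; rewrite scalerA. Qed.

Lemma teval_map_scaled m (f : {ffun 'I_m -> H} -> W) (a : K)
    (h : {ffun 'I_k -> H} -> {ffun 'I_m -> H}) t :
  teval f [seq (a * q.1, h q.2) | q : K * {ffun 'I_k -> H} <- t] = a *: teval (f \o h) t.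
Proof.
by rewrite /teval big_map scaler_sumr; apply: eq_bigr => p _; rewrite scalerA.
Qed.

End Teval.

Section Multilinear.
Variable W : lmodType K.

Lemma multilinear_fcons0 k (f : {ffun 'I_k.+1 -> H} -> W) : multilinear f ->
  forall u a x y, f (fcons (a *: x + y) u) = a *: f (fcons x u) + f (fcons y u).
Proof. by move=> Hf u a x y; have := Hf (fcons 0 u) ord0 a x y; rewrite !fset_fcons0. Qed.

Lemma multilinear_fconsS k (f : {ffun 'I_k.+1 -> H} -> W) : multilinear f ->
  forall z u j a x y, f (fcons z (fset u j (a *: x + y)))
     = a *: f (fcons z (fset u j x)) + f (fcons z (fset u j y)).
Proof.
by move=> Hf z u j a x y; have := Hf (fcons z u) (lift ord0 j) a x y; rewrite !fset_fconsS.
Qed.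

Lemma multilinear_fcons1 k (f : {ffun 'I_k.+2 -> H} -> W) : multilinear f ->
  forall z u a x y, f (fcons z (fcons (a *: x + y) u))
     = a *: f (fcons z (fcons x u)) + f (fcons z (fcons y u)).
Proof.
by move=> Hf z u a x y; have := multilinear_fconsS Hf z (fcons 0 u) ord0 a x y; rewrite !fset_fcons0.
Qed.

Lemma multilinear_fconsSS k (f : {ffun 'I_k.+2 -> H} -> W) : multilinear f ->
  forall z b u j a x y, f (fcons z (fcons b (fset u j (a *: x + y))))
     = a *: f (fcons z (fcons b (fset u j x))) + f (fcons z (fcons b (fset u j y))).
Proof.
move=> Hf z b u j a x y.
by have := multilinear_fconsS Hf z (fcons b u) (lift ord0 j) a x y; rewrite !fset_fconsS.
Qed.

Lemma multilinear_fcons k (f : {ffun 'I_k.+1 -> H} -> W) :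
  (forall u a x y, f (fcons (a *: x + y) u) = a *: f (fcons x u) + f (fcons y u)) ->
  (forall z u j a x y, f (fcons z (fset u j (a *: x + y)))
     = a *: f (fcons z (fset u j x)) + f (fcons z (fset u j y))) ->
  multilinear f.
Proof.
move=> f0 fS t i a x y; rewrite -(fcons_ftail t).
by case: (unliftP ord0 i) => [j ->|->]; rewrite ?fset_fconsS ?fS ?fset_fcons0 ?f0.
Qed.

Lemma multilinear_fcons2 k (f : {ffun 'I_k.+2 -> H} -> W) :
  (forall u b a x y, f (fcons (a *: x + y) (fcons b u))
     = a *: f (fcons x (fcons b u)) + f (fcons y (fcons b u))) ->
  (forall u z a x y, f (fcons z (fcons (a *: x + y) u))
     = a *: f (fcons z (fcons x u)) + f (fcons z (fcons y u))) ->
  (forall z b u j a x y, f (fcons z (fcons b (fset u j (a *: x + y))))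
     = a *: f (fcons z (fcons b (fset u j x))) + f (fcons z (fcons b (fset u j y)))) ->
  multilinear f.
Proof.
move=> f0 f1 fSS; apply: multilinear_fcons => [u a x y|z u j a x y].
  by rewrite -(fcons_ftail u) f0.
rewrite -(fcons_ftail u).
by case: (unliftP ord0 j) => [j' ->|->]; rewrite ?fset_fconsS ?fSS ?fset_fcons0 ?f1.
Qed.

End Multilinear.

Lemma teq_map k m (h : {ffun 'I_k -> H} -> {ffun 'I_m -> H}) (t u : fts H k) :
  (forall (W : lmodType K) (f : {ffun 'I_m -> H} -> W), multilinear f -> multilinear (f \o h)) ->
  teq t u ->
  teq [seq (p.1, h p.2) | p : K * {ffun 'I_k -> H} <- t]
      [seq (p.1, h p.2) | p : K * {ffun 'I_k -> H} <- u].
Proof. by move=> hML E W f Hf; rewrite !teval_map; apply/E/hML. Qed.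

Lemma teq_tpermute k (s : 'S_k) (t u : fts H k) :
  teq t u -> teq (tpermute s t) (tpermute s u).
Proof. by apply: teq_map => W f Hf x i a v w /=; rewrite !fperm_fset Hf. Qed.

Lemma teq_tunit_first k (t u : fts H k) : teq t u -> teq (tunit_first t) (tunit_first u).
Proof.
apply: teq_map => W f Hf x i a v w /=.
by have := Hf (fcons 1 x) (lift ord0 i) a v w; rewrite !fset_fconsS.
Qed.

Lemma teq_tapply0 (S : H -> H) :
  (forall (a : K) (x y : H), S (a *: x + y) = a *: S x + S y) ->
  forall k (t u : fts H k.+1), teq t u -> teq (tapply S ord0 t) (tapply S ord0 u).
Proof.
move=> S_lin k t u; apply: (teq_map (h := fun x => fset x ord0 (S (x ord0)))) => W f Hf.
apply: multilinear_fcons => [u' a x y|z u' j a x y] /=; rewrite !fcons0 !fset_fcons0.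
  by rewrite S_lin (multilinear_fcons0 Hf).
by rewrite (multilinear_fconsS Hf).
Qed.

Lemma teq_tmul_first k (t u : fts H k.+2) : teq t u -> teq (tmul_first t) (tmul_first u).
Proof.
apply: (teq_map (h := fun x => fcons (x ord0 * x (lift ord0 ord0)) (ftail (ftail x))))
  => W f Hf.
apply: multilinear_fcons2 => * /=; rewrite !fcons0 !fconsS !fcons0 !ftail_fcons.
- by rewrite mulrDl -scalerAl (multilinear_fcons0 Hf).
- by rewrite mulrDr -scalerAr (multilinear_fcons0 Hf).
- by rewrite (multilinear_fconsS Hf).
Qed.

Lemma teq_tcounit_first (eps : H -> K) :
  (forall (a : K) (x y : H), eps (a *: x + y) = a * eps x + eps y) ->
  forall k (t u : fts H k.+1), teq t u -> teq (tcounit_first eps t) (tcounit_first eps u).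
Proof.
move=> eps_lin k t u E W f Hf; rewrite /tcounit_first.
rewrite !(teval_map_weighted f (fun x => eps (x ord0)) (@ftail _ k)); apply: E.
apply: multilinear_fcons => [u' a x y|z u' j a x y]; rewrite ?fcons0 ?ftail_fcons.
  by rewrite eps_lin scalerDl scalerA.
by rewrite Hf scalerDr !scalerA mulrC.
Qed.

Lemma teval_tcop_first (D : H -> fts H 2) k (W : lmodType K) (f : {ffun 'I_k.+2 -> H} -> W) t :
  teval f (tcop_first D t) =
  teval (fun x => teval (fun y : {ffun 'I_2 -> H} =>
          f (fcons (y ord0) (fcons (y ord_max) (ftail x)))) (D (x ord0))) t.
Proof.
rewrite /tcop_first /teval big_flatten /= big_map; apply: eq_bigr => p _.
exact: (teval_map_scaled f p.1 (fun y : {ffun 'I_2 -> H} =>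
          fcons (y ord0) (fcons (y ord_max) (ftail p.2)))).
Qed.

Lemma teq_tcop_first (D : H -> fts H 2) :
  (forall (a : K) (x y : H), teq (D (a *: x + y)) (tscale a (D x) ++ D y)) ->
  forall k (t u : fts H k.+1), teq t u -> teq (tcop_first D t) (tcop_first D u).
Proof.
move=> D_lin k t u E W f Hf; rewrite !teval_tcop_first; apply: E.
apply: multilinear_fcons => [u' a x y|z u' j a x y]; rewrite !fcons0 !ftail_fcons.
  rewrite D_lin ?teval_cat ?teval_tscale //.
  apply: multilinear_fcons2 => [e b a' x' y'|e z a' x' y'|z b e j]; last by case: j.
    by rewrite !fcons0 !fcons_max2 (multilinear_fcons0 Hf).
  by rewrite !fcons0 !fcons_max2 (multilinear_fcons1 Hf).
rewrite -teval_linear; apply: eq_teval => y0.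
by rewrite (multilinear_fconsSS Hf).
Qed.

End TensorOperations.

Section Agreement.
Variables (K : fieldType) (H : algType K) (D : H -> fts H 2) (eps : H -> K) (S : H -> H).
Variables (G : groupType) (phi psi : forall k : nat, {ffun 'I_k -> G} -> fts H k).
Hypotheses (hopfH : is_hopf D eps S).
Hypotheses (homH_phi : is_homH D eps S phi) (homH_psi : is_homH D eps S psi).

Definition agree k (t : {ffun 'I_k -> G}) := teq (phi t) (psi t).

Lemma agree_transport k m (F : fts H k -> fts H m)
    (t : {ffun 'I_k -> G}) (t' : {ffun 'I_m -> G}) :
  (forall u v, teq u v -> teq (F u) (F v)) ->
  (forall chi, is_homH D eps S chi -> teq (chi m t') (F (chi k t))) ->
  agree t -> agree t'.
Proof.
move=> F_teq chi_t' E; apply: teq_trans (chi_t' _ homH_phi) _.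
exact: teq_trans (F_teq _ _ E) (teq_sym (chi_t' _ homH_psi)).
Qed.

Lemma agree_fperm k (s : 'S_k) t : agree t -> agree (fperm s t).
Proof. by apply: (agree_transport (@teq_tpermute _ _ k s)) => chi /homH_perm. Qed.

Lemma agree_ftail k (t : {ffun 'I_k.+1 -> G}) : agree t -> agree (ftail t).
Proof.
apply: (agree_transport (teq_tcounit_first (counit_linear hopfH) (k := k))).
by move=> chi /homH_counit chi_t; apply: teq_sym.
Qed.

Lemma agree_dup k x (t : {ffun 'I_k -> G}) : agree (fcons x t) -> agree (fcons x (fcons x t)).
Proof. by apply: (agree_transport (teq_tcop_first (cop_linear hopfH) (k := k))) => chi /homH_diag. Qed.

Lemma agree_mul k x y (t : {ffun 'I_k -> G}) :
  agree (fcons x (fcons y t)) -> agree (fcons (x * y)%g t).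
Proof. by apply: (agree_transport (@teq_tmul_first _ _ k)) => chi /homH_mul. Qed.

Lemma agree_inv k x (t : {ffun 'I_k -> G}) : agree (fcons x t) -> agree (fcons (x^-1)%g t).
Proof. by apply: (agree_transport (teq_tapply0 (antipode_linear hopfH) (k := k))) => chi /homH_inv. Qed.

Lemma agree_one k (t : {ffun 'I_k -> G}) : agree t -> agree (fcons 1%g t).
Proof. by apply: (agree_transport (@teq_tunit_first _ _ k)) => chi /homH_one. Qed.

Definition agree_seq (l : seq G) :=
  forall k (t : {ffun 'I_k -> G}), perm_eq (codom t) l -> agree t.

Lemma agree_seqP k (t : {ffun 'I_k -> G}) : agree_seq (codom t) <-> agree t.
Proof.
split=> [|At m u Pu]; first exact.
have Em : m = k by have := perm_size Pu; rewrite !size_codom !card_ord.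
subst m; have [s ->] := perm_codom_fperm Pu.
exact: agree_fperm.
Qed.

Lemma agree_seq_perm l l' : perm_eq l l' -> agree_seq l -> agree_seq l'.
Proof. by move=> P Al k t Pt; apply: Al; rewrite (permPr P). Qed.

Lemma agree_seq_behead x l : agree_seq (x :: l) -> agree_seq l.
Proof.
rewrite -(codom_ffun_of_seq 1%g l) -codom_fcons => /agree_seqP/agree_ftail.
by rewrite ftail_fcons => /agree_seqP.
Qed.

Lemma agree_seq_dup x l : agree_seq (x :: l) -> agree_seq (x :: x :: l).
Proof.
by rewrite -(codom_ffun_of_seq 1%g l) -!codom_fcons => /agree_seqP/agree_dup/agree_seqP.
Qed.

Lemma agree_seq_mul x y l : agree_seq (x :: y :: l) -> agree_seq ((x * y)%g :: l).
Proof.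
by rewrite -(codom_ffun_of_seq 1%g l) -!codom_fcons => /agree_seqP/agree_mul/agree_seqP.
Qed.

Lemma agree_seq_inv x l : agree_seq (x :: l) -> agree_seq ((x^-1)%g :: l).
Proof.
by rewrite -(codom_ffun_of_seq 1%g l) -!codom_fcons => /agree_seqP/agree_inv/agree_seqP.
Qed.

Lemma agree_seq_one l : agree_seq l -> agree_seq (1%g :: l).
Proof.
by rewrite -(codom_ffun_of_seq 1%g l) -!codom_fcons => /agree_seqP/agree_one/agree_seqP.
Qed.

Lemma agree_seq_catl h m : agree_seq (h ++ m) -> agree_seq h.
Proof.
elim: m => [|x m IHm] Ahm; first by rewrite cats0 in Ahm.
apply/IHm/(@agree_seq_behead x)/(agree_seq_perm _ Ahm).
by rewrite -cat1s perm_catCA.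
Qed.

Lemma agree_seq_cons_gen n (gs : {ffun 'I_n -> G}) x : in_gen gs x ->
  forall l, {subset codom gs <= l} -> agree_seq l -> agree_seq (x :: l).
Proof.
elim=> [i||y z _ IHy _ IHz|y _ IHy] l gs_l Al.
- have /perm_to_rem gs_rem := gs_l _ (codom_f gs i).
  have /agree_seq_dup := agree_seq_perm gs_rem Al.
  by apply: agree_seq_perm; rewrite perm_cons perm_sym.
- exact: agree_seq_one.
- apply/agree_seq_mul/IHy/IHz => // w /gs_l w_l.
  by rewrite inE w_l orbT.
- exact/agree_seq_inv/IHy.
Qed.

Lemma agree_of_generators n (gs : {ffun 'I_n -> G}) :
  (forall x : G, in_gen gs x) -> agree gs -> forall k (t : {ffun 'I_k -> G}), agree t.
Proof.
move=> gen /agree_seqP A_gs k t; apply/agree_seqP.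
apply: (@agree_seq_catl _ (codom gs)); elim: (codom t) => //= x h IHh.
by apply: agree_seq_cons_gen IHh => // w w_gs; rewrite mem_cat w_gs orbT.
Qed.

End Agreement.

Theorem mainTheorem2 (K : fieldType) (H : algType K)
    (D : H -> fts H 2) (eps : H -> K) (S : H -> H)
    (G : groupType) (n : nat) (gs : {ffun 'I_n -> G}) :
  [pchar K] =i pred0 ->
  is_hopf D eps S -> cocommutative D ->
  (forall x : G, in_gen gs x) ->
  forall phi psi : forall k : nat, {ffun 'I_k -> G} -> fts H k,
    is_homH D eps S phi -> is_homH D eps S psi ->
    teq (phi n gs) (psi n gs) ->
    forall (k : nat) (g : {ffun 'I_k -> G}), teq (phi k g) (psi k g).
Proof.
move=> _ hopfH _ gen phi psi homH_phi homH_psi agree_gs.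
exact: (agree_of_generators hopfH homH_phi homH_psi gen agree_gs).
Qed.
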